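(* Let $a$ and $b$ be real constants with $a>b>0$. There is a constant $C_0>0$ such that for every $j\in\mathbb{Z}_+$, every $R\ge C_0(j+1)$ and every $\rho>0$, $$\int_{R}^{+\infty}\frac{1}{\tau^{j}}e^{-a|\rho-\tau|-b\tau}\,d\tau\le\left(\frac1a+\frac{2}{a-b}\right)\frac{e^{-b\rho}}{\rho^{j}}.$$ *)

From HB Require Import structures.
From mathcomp Require Import all_boot all_order all_algebra.
From mathcomp Require Import all_classical all_reals all_analysis.
Set Implicit Arguments. Unset Strict Implicit. Unset Printing Implicit Defensive.

From HB Require Import structures.
From mathcomp Require Import all_boot all_order all_algebra.
From mathcomp Require Import all_classical all_reals all_analysis.
From mathcomp Require Import measurable_realfun ring lra.
Import Order.TTheory GRing.Theory Num.Theory.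
Import numFieldNormedType.Exports.
Local Open Scope classical_set_scope.
Local Open Scope ring_scope.

(* Split the integral at [rho] and let [K = exp (-b rho) / rho^j].  For
   [tau >= rho], [tau^-j <= rho^-j] and [b tau >= b rho], so the integrand is at
   most [K exp (-a (tau - rho))], which integrates to [K/a].  For [tau < rho],
   [(rho/tau)^j <= exp (j (rho - tau)/tau) <= exp (c (rho - tau))] with
   [c = (a - b)/2] as soon as [j <= c tau], which [C0 = 1/c] guarantees on
   [[R, +oo[]; half of the decay [exp (-(a - b)(rho - tau))] absorbs this loss
   and the remaining [K exp (-c (rho - tau))] integrates to at most [K/c]. *)

Section scaled_expR.
Context {R : realType}.
Variables (k c p : R).

Lemma is_derive_scaled_expR (x : R) :
  is_derive x 1 (fun y => k * expR (c * (y - p))) (k * (expR (c * (x - p)) * c)).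
Proof.
have dlin : is_derive x 1 (fun y : R => c * (y - p)) (c * (1 - 0)) by apply: is_deriveZ.
apply: is_deriveZ.
have := is_derive1_comp (is_derive_expR _) dlin.
by rewrite subr0 mulr1.
Qed.

Lemma derivable_scaled_expR (x : R) : derivable (fun y => k * expR (c * (y - p))) x 1.
Proof. by have [] := is_derive_scaled_expR x. Qed.

Lemma derive1_scaled_expR (x : R) :
  derive1 (fun y => k * expR (c * (y - p))) x = k * (expR (c * (x - p)) * c).
Proof. by rewrite derive1E; have [_ ->] := is_derive_scaled_expR x. Qed.

Lemma continuous_scaled_expR : continuous (fun y : R => k * expR (c * (y - p))).
Proof.
move=> x; apply: differentiable_continuous; rewrite -derivable1_diffP.
exact: derivable_scaled_expR.
Qed.

Lemma measurable_scaled_expR (D : set R) :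
  measurable_fun D (fun y => (k * expR (c * (y - p)))%:E).
Proof.
apply: measurableT_comp; first exact: EFin_measurable.
apply: measurable_funTS.
exact: continuous_measurable_fun continuous_scaled_expR.
Qed.

Lemma cvgy_scaled_expR : c < 0 -> k * expR (c * (y - p)) @[y --> +oo] --> 0.
Proof.
move=> c_lt0; rewrite -(mulr0 k); apply: cvgMl_tmp.
have -> : (fun y => expR (c * (y - p))) = (fun z => expR (- z)) \o (fun y => - c * (y - p)).
  by apply/funext => y /=; rewrite mulNr opprK.
apply: (@cvg_comp _ _ _ _ _ _ (pinfty_nbhs R)); last exact: cvgr_expR.
by apply: gt0_cvgMry; [rewrite oppr_gt0 | exact: cvg_addrr].
Qed.

End scaled_expR.

Lemma integral_expR_itvcy {R : realType} (k c p : R) : 0 < c -> 0 <= k ->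
  (\int[lebesgue_measure]_(x in `[p, +oo[) (k * expR (- c * (x - p)))%:E
    = (k / c)%:E)%E.
Proof.
move=> c_gt0 k_ge0.
rewrite (@ge0_continuous_FTC2y _ _ (fun y => - (k / c) * expR (- c * (y - p))) p 0).
- by rewrite subrr mulr0 expR0 mulr1 sub0e EFinN oppeK.
- by move=> x _; rewrite mulr_ge0 ?expR_ge0.
- exact/continuous_subspaceT/continuous_scaled_expR.
- by apply: cvgy_scaled_expR; rewrite oppr_lt0.
- by move=> x _; exact: derivable_scaled_expR.
- exact/cvg_at_right_filter/continuous_scaled_expR.
- by move=> x _; rewrite derive1_scaled_expR; field; rewrite gt_eqF.
Qed.

Lemma integral_expR_itvcc_le {R : realType} (k c m p : R) : 0 < c -> 0 <= k -> m < p ->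
  (\int[lebesgue_measure]_(x in `[m, p]) (k * expR (c * (x - p)))%:E
    <= (k / c)%:E)%E.
Proof.
move=> c_gt0 k_ge0 mp.
rewrite (@continuous_FTC2 _ _ (fun y => (k / c) * expR (c * (y - p))) m p mp).
- rewrite subrr mulr0 expR0 mulr1 -EFinB lee_fin gerBl.
  by rewrite mulr_ge0 ?divr_ge0 ?expR_ge0 // ltW.
- exact/continuous_subspaceT/continuous_scaled_expR.
- split.
  + by move=> x _; exact: derivable_scaled_expR.
  + exact/cvg_at_right_filter/continuous_scaled_expR.
  + exact/cvg_at_left_filter/continuous_scaled_expR.
- by move=> x _; rewrite derive1_scaled_expR; field; rewrite gt_eqF.
Qed.

Section ge0_integral_compare.
Context {d} {T : measurableType d} {R : realType} (mu : {measure set T -> \bar R}).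
Local Open Scope ereal_scope.

Lemma ge0_integral_split (D L : set T) (f : T -> \bar R) :
  measurable D -> measurable L -> measurable_fun D f -> (forall x, D x -> 0 <= f x) ->
  \int[mu]_(x in D) f x = \int[mu]_(x in D `&` L) f x + \int[mu]_(x in D `&` ~` L) f x.
Proof.
move=> mD mL mf f_ge0.
have DE : D = (D `&` L) `|` (D `&` ~` L) by rewrite -setIUr setUv setIT.
rewrite [in LHS]DE ge0_integral_setU -?DE //.
- exact: measurableI.
- by apply: measurableI => //; exact: measurableC.
- by apply/disj_setPS => x [[_ ?] [_ ?]].
Qed.

Lemma ge0_le_integral_subset (D A : set T) (f g : T -> \bar R) :
  measurable D -> measurable A -> D `<=` A ->
  measurable_fun D f -> measurable_fun A g ->
  (forall x, D x -> 0 <= f x) -> (forall x, A x -> 0 <= g x) ->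
  (forall x, D x -> f x <= g x) ->
  \int[mu]_(x in D) f x <= \int[mu]_(x in A) g x.
Proof.
move=> mD mA DA mf mg f_ge0 g_ge0 fg.
apply: (@le_trans _ _ (\int[mu]_(x in D) g x)).
  by apply: ge0_le_integral => //; exact: measurable_funS mg.
exact: ge0_subset_integral.
Qed.

End ge0_integral_compare.

Lemma exprn_le_expR_ratio {R : realType} (tau rho : R) (j : nat) :
  0 < tau -> tau <= rho -> rho ^+ j <= tau ^+ j * expR (j%:R * ((rho - tau) / tau)).
Proof.
move=> tau_gt0 tau_le_rho.
set s := (rho - tau) / tau.
have rho_le : rho <= tau * expR s.
  have <- : tau * (1 + s) = rho by rewrite /s; field; rewrite gt_eqF.
  by rewrite ler_wpM2l ?expR_ge1Dx // ltW.
rewrite expRM_natl -exprMn lerXn2r // nnegrE.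
- exact: (le_trans (ltW tau_gt0)).
- by rewrite mulr_ge0 ?expR_ge0 // ltW.
Qed.

Section kernel.
Context {R : realType}.
Variables (a b rho : R) (j : nat).
Hypothesis rho_gt0 : 0 < rho.

Definition kernel (tau : R) := (tau ^+ j)^-1 * expR (- a * `|rho - tau| - b * tau).

Let K := expR (- b * rho) / rho ^+ j.
Let c := (a - b) / 2.

Let K_ge0 : 0 <= K.
Proof. by rewrite divr_ge0 ?expR_ge0 // exprn_ge0 // ltW. Qed.

Lemma kernel_ge0 (tau : R) : 0 <= tau -> 0 <= kernel tau.
Proof. by move=> tau_ge0; rewrite mulr_ge0 ?expR_ge0 // invr_ge0 exprn_ge0. Qed.

Lemma measurable_kernel : measurable_fun (`]0, +oo[ : set R) (fun tau => (kernel tau)%:E).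
Proof.
apply/measurable_EFinP.
apply: open_continuous_measurable_fun; first exact: interval_open.
move=> x; rewrite inE /= in_itv /= andbT => x_gt0.
have inv_cont : {for x, continuous (fun t : R => (t ^+ j)^-1)}.
  by apply: continuousV; [rewrite expf_neq0 // gt_eqF | exact: exprn_continuous].
have dist_cont : continuous (fun t : R => `|rho - t|).
  move=> t; apply: (@continuous_comp _ _ _ (fun t => rho - t) Num.norm).
    by apply: (@continuousB _ _ _ (cst rho) id); [exact: cst_continuous | exact: cvg_id].
  exact: norm_continuous.
have exponent_cont : continuous (fun t : R => - a * `|rho - t| - b * t).
  move=> t; apply: (@continuousB _ _ _ (fun t => - a * `|rho - t|) ( *%R b)).
    by apply: (@continuousM _ _ (cst (- a)) (fun t => `|rho - t|)); [exact: cst_continuous | exact: dist_cont].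
  by apply: (@continuousM _ _ (cst b) id); [exact: cst_continuous | exact: cvg_id].
apply: (@continuousM _ _ (fun t : R => (t ^+ j)^-1) (fun t => expR (- a * `|rho - t| - b * t))).
  exact: inv_cont.
apply: (@continuous_comp _ _ _ (fun t : R => - a * `|rho - t| - b * t) expR).
  exact: exponent_cont.
exact: continuous_expR.
Qed.

Lemma kernel_le_above (tau : R) : 0 <= b -> rho <= tau ->
  kernel tau <= K * expR (- a * (tau - rho)).
Proof.
move=> b_ge0 rho_le_tau.
have tau_gt0 : 0 < tau by exact: lt_le_trans rho_le_tau.
rewrite /kernel /K ler0_norm ?subr_le0 // mulrAC mulrC.
apply: ler_pM; rewrite ?expR_ge0 ?invr_ge0 ?exprn_ge0 ?(ltW tau_gt0) //.
- by rewrite -expRD ler_expR; nra.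
- by rewrite lef_pV2 ?posrE ?exprn_gt0 // lerXn2r // nnegrE ltW.
Qed.

Lemma kernel_le_below (tau : R) : 0 < tau -> tau <= rho -> j%:R <= c * tau ->
  kernel tau <= K * expR (c * (tau - rho)).
Proof.
move=> tau_gt0 tau_le_rho j_le.
have rho_pow_le : rho ^+ j <= tau ^+ j * expR (c * (rho - tau)).
  apply: (le_trans (exprn_le_expR_ratio _ _ j tau_gt0 tau_le_rho)).
  rewrite ler_pM2l ?exprn_gt0 // ler_expR mulrCA [leRHS]mulrC.
  by rewrite ler_wpM2l ?subr_ge0 // ler_pdivrMr.
have expR_split : expR (- a * (rho - tau) - b * tau) * expR (c * (rho - tau))
    = expR (- b * rho) * expR (c * (tau - rho)).
  by rewrite -!expRD /c; congr expR; field.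
rewrite /kernel /K ger0_norm ?subr_ge0 // mulrC mulrAC.
rewrite ler_pdivlMr ?exprn_gt0 // mulrAC ler_pdivrMr ?exprn_gt0 //.
by rewrite -expR_split -mulrA ler_wpM2l ?expR_ge0 // mulrC.
Qed.

Lemma integral_kernel_above (A : set R) : 0 <= b -> 0 < a ->
  measurable A -> A `<=` `[rho, +oo[ ->
  (\int[lebesgue_measure]_(tau in A) (kernel tau)%:E <= (K / a)%:E)%E.
Proof.
move=> b_ge0 a_gt0 mA A_ge.
rewrite -(integral_expR_itvcy _ _ rho a_gt0 K_ge0).
apply: ge0_le_integral_subset => //.
- apply: measurable_funS measurable_kernel => // x /A_ge.
  by rewrite /= !in_itv /= !andbT; exact: lt_le_trans.
- exact: measurable_scaled_expR.
- move=> x /A_ge; rewrite /= in_itv /= andbT => rho_le_x.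
  by rewrite lee_fin kernel_ge0 // ltW // (lt_le_trans rho_gt0).
- by move=> x _; rewrite lee_fin mulr_ge0 ?expR_ge0.
- move=> x /A_ge; rewrite /= in_itv /= andbT => rho_le_x.
  by rewrite lee_fin kernel_le_above.
Qed.

Lemma integral_kernel_below (A : set R) : b < a ->
  measurable A -> A `<=` `]0, rho] -> (forall tau, A tau -> j%:R <= c * tau) ->
  (\int[lebesgue_measure]_(tau in A) (kernel tau)%:E <= (K / c)%:E)%E.
Proof.
move=> ba mA A_sub j_le.
have c_gt0 : 0 < c by rewrite divr_gt0 // subr_gt0.
apply: le_trans (integral_expR_itvcc_le _ _ _ _ c_gt0 K_ge0 rho_gt0).
apply: ge0_le_integral_subset => //.
- move=> x /A_sub; rewrite /= !in_itv /= => /andP[x_gt0 x_le].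
  by rewrite (ltW x_gt0).
- apply: measurable_funS measurable_kernel => // x /A_sub.
  by rewrite /= !in_itv /= andbT => /andP[].
- exact: measurable_scaled_expR.
- move=> x /A_sub; rewrite /= in_itv /= => /andP[x_gt0 _].
  by rewrite lee_fin kernel_ge0 // ltW.
- by move=> x _; rewrite lee_fin mulr_ge0 ?expR_ge0.
- move=> x Ax; have := A_sub _ Ax; rewrite /= in_itv /= => /andP[x_gt0 x_le].
  by rewrite lee_fin kernel_le_below // j_le.
Qed.

End kernel.

Theorem lemma5p7 (R : realType) (a b : R) (hb : 0 < b) (hab : b < a) :
  exists C0 : R, 0 < C0 /\
    forall (j : nat) (Rr rho : R), C0 * (j.+1)%:R <= Rr -> 0 < rho ->
      (\int[lebesgue_measure]_(tau in `[Rr, +oo[)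
          ((tau ^+ j)^-1 * expR (- a * `|rho - tau| - b * tau))%:E
       <= ((a^-1 + 2 / (a - b)) * (expR (- b * rho) / rho ^+ j))%:E)%E.
Proof.
have ab_gt0 : 0 < a - b by rewrite subr_gt0.
exists (2 / (a - b)); split; first by rewrite divr_gt0.
move=> j Rr rho hRr rho_gt0.
have Rr_gt0 : 0 < Rr by apply: lt_le_trans hRr; rewrite mulr_gt0 ?divr_gt0.
have j_le tau : Rr <= tau -> j%:R <= (a - b) / 2 * tau.
  have cC0 : (a - b) / 2 * (2 / (a - b) * j.+1%:R) = j.+1%:R.
    by field; rewrite gt_eqF.
  move=> Rr_le; have := ler_wpM2l (ltW (divr_gt0 ab_gt0 (ltr0Sn _ 1))) (le_trans hRr Rr_le).
  by rewrite cC0; apply: le_trans; rewrite ler_nat.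
have -> : (a^-1 + 2 / (a - b)) * (expR (- b * rho) / rho ^+ j)
    = expR (- b * rho) / rho ^+ j / ((a - b) / 2) + expR (- b * rho) / rho ^+ j / a.
  by field; rewrite !gt_eqF ?exprn_gt0 // (lt_trans hb hab).
have Rr_itv_pos : `[Rr, +oo[%classic `<=` (`]0, +oo[ : set R).
  by move=> x; rewrite /= !in_itv /= !andbT; exact: lt_le_trans.
rewrite (ge0_integral_split lebesgue_measure _ `]-oo, rho[%classic) //; last first.
- by move=> x /Rr_itv_pos; rewrite /= in_itv /= andbT => x_gt0; rewrite lee_fin kernel_ge0 // ltW.
- exact: measurable_funS (measurable_kernel _ _ _ _).
rewrite setCitvl EFinD leeD //.
- apply: integral_kernel_below => //; first exact: measurableI.
  + move=> x [/(Rr_itv_pos x)]; rewrite /= !in_itv /= andbT => x_gt0 x_lt.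
    by rewrite x_gt0 ltW.
  + by move=> tau [] /=; rewrite in_itv /= andbT => /j_le.
- apply: integral_kernel_above => //; first exact: ltW.
  + exact: lt_trans hab.
  + exact: measurableI.
Qed.
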